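(* The family of Boolean functions $\{\operatorname{SSD}_{2k,k+1}\}_{k \geq 1}$ is not in $\mathrm{AC}^0$; that is, there is no family of Boolean circuits with $\land$, $\lor$, $\neg$ gates (unbounded fan-in), of size polynomial in the input length and of constant depth, that computes $\operatorname{SSD}_{2k,k+1}$ for all $k \geq 1$.
   Context: For integers $n \geq k \geq 1$, $\operatorname{SSD}_{n,k} : \{0,1\}^n \times \{0,1\}^k \to \{0,1\}$ is defined by $\operatorname{SSD}_{n,k}(x,y) = 1$ if $y$ is a subsequence of $x$ (i.e. there are indices $i_1 < i_2 < \dots < i_k$ with $x_{i_j} = y_j$ for all $j$), and $0$ otherwise. It is viewed as a Boolean function of its $n+k$ input bits. *)

From mathcomp Require Import all_boot.
Set Implicit Arguments. Unset Strict Implicit. Unset Printing Implicit Defensive.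

Definition SSD (n k : nat) (x : n.-tuple bool) (y : k.-tuple bool) : bool :=
  subseq y x.

Definition SSD_bits (n k : nat) (z : (n + k).-tuple bool) : bool :=
  subseq (drop n z) (take n z).
Arguments SSD_bits : clear implicits.

(* A circuit on N inputs is a list of gates g_0, ..., g_{s-1}.  Wires are
   numbered: wires 0..N-1 are the inputs, wire N+i is the output of gate g_i.
   A gate may only read wires with smaller numbers (so the circuit is a DAG).
   The output of the circuit is the last wire (the last gate).  *)
Inductive gate : Type :=
| GAnd of seq nat
| GOr  of seq nat
| GNot of nat.

Definition circuit := seq gate.

Definition gate_inputs (g : gate) : seq nat :=
  match g with GAnd s => s | GOr s => s | GNot j => [:: j] end.

Fixpoint wf_from (m : nat) (C : circuit) : bool :=
  match C with
  | [::] => true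
  | g :: C' => all (fun j => j < m) (gate_inputs g) && wf_from m.+1 C'
  end.

Definition wf_circuit (N : nat) (C : circuit) : bool := wf_from N C.

Definition csize (C : circuit) : nat := size C.

Definition gate_val (vals : seq bool) (g : gate) : bool :=
  match g with
  | GAnd s => all (fun j => nth false vals j) s
  | GOr s => has (fun j => nth false vals j) s
  | GNot j => ~~ nth false vals j
  end.

Definition wire_values (C : circuit) (inp : seq bool) : seq bool :=
  foldl (fun vals g => rcons vals (gate_val vals g)) inp C.

Definition circuit_eval (C : circuit) (inp : seq bool) : bool :=
  last false (wire_values C inp).

Definition gate_depth (ds : seq nat) (g : gate) : nat :=
  (\max_(j <- gate_inputs g) nth 0 ds j).+1.

Definition wire_depths (N : nat) (C : circuit) : seq nat :=
  foldl (fun ds g => rcons ds (gate_depth ds g)) (nseq N 0) C.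

Definition cdepth (N : nat) (C : circuit) : nat :=
  \max_(d <- wire_depths N C) d.

Definition AC0_family (N : nat -> nat) (f : forall k, (N k).-tuple bool -> bool) : Prop :=
  exists (C : nat -> circuit) (d c : nat),
    forall k, 1 <= k ->
      [/\ wf_circuit (N k) (C k),
          cdepth (N k) (C k) <= d,
          csize (C k) <= c * (N k) ^ c
        & forall z : (N k).-tuple bool, circuit_eval (C k) z = f k z].

(* Razborov-Smolensky.  Fixing x = z 1^(n-t) 0^t and y = 1^(n+1) turns a
   circuit for SSD_{2n,n+1} into one computing the threshold [t < |z|] on n
   bits, and parity is the alternating sum of these n thresholds.  Over 'Z_3,
   every OR gate is replaced by Razborov's polynomial of degree 2l in its
   inputs, chosen by averaging so that it errs on at most a 2^-l fraction of
   the inputs (AND and NOT reduce to OR and 1 - x), so parity agrees with a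
   polynomial of degree (2l)^d outside a set of density n * size * 2^-l.
   Smolensky's argument bounds such agreement by the number of sets of size at
   most n/2 + (2l)^d, which is below 3/4 of all 2^n inputs once (2l)^d is
   below sqrt n; for polynomial size and constant depth l = O(log n) makes
   both constraints hold. *)

From mathcomp Require Import all_boot ssralg zmodp zify ring.
Set Implicit Arguments. Unset Strict Implicit. Unset Printing Implicit Defensive.
Import GRing.Theory.

Section SymDiff.
Variable T : finType.
Implicit Types A B C : {set T}.

Definition symdiff A B := (A :\: B) :|: (B :\: A).

Lemma symdiffK A : involutive (symdiff A).
Proof.
by move=> B; apply/setP => i; rewrite !inE; case: (i \in A); case: (i \in B).
Qed.

Lemma card_symdiff_le A B : #|symdiff A B| <= #|A| + #|B|.
Proof.
apply: leq_trans (_ : #|A :|: B| <= _); last by rewrite cardsU leq_subr.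
by apply/subset_leq_card/subsetP => i; rewrite !inE; case: (i \in A); case: (i \in B).
Qed.

Lemma odd_card_symdiffI A B C :
  odd #|symdiff A B :&: C| = odd #|A :&: C| (+) odd #|B :&: C|.
Proof.
set I := A :&: C :&: (B :&: C); set U := A :&: C :|: B :&: C.
have -> : symdiff A B :&: C = U :\: I.
  by apply/setP => i; rewrite !inE; case: (i \in A); case: (i \in B); case: (i \in C).
have /setIidPr sub_IU : I \subset U by rewrite subsetU // subsetIl.
have := cardsID I U; rewrite sub_IU => cardU.
rewrite -oddD -cardsUI -/U -/I -cardU addnAC addnn oddD odd_double.
by case: (odd _).
Qed.

End SymDiff.

Section Characters.
Variable n : nat.
Local Notation X := (n.-tuple bool).
Implicit Types (S : {set 'I_n}) (z : X).

Definition ones z : {set 'I_n} := [set i | tnth z i].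

Definition chi S z : 'Z_3 := ((-1) ^+ #|S :&: ones z|)%R.

Definition parity z : 'Z_3 := (odd #|ones z|)%:R%R.

Lemma card_ones z : #|ones z| = count id z.
Proof.
rewrite /ones cardsE cardE /enum_mem size_filter -{2}(map_tnth_enum z) count_map.
by rewrite enumT; apply: eq_count => i.
Qed.

Lemma chiM A B z : (chi A z * chi B z = chi (symdiff A B) z)%R.
Proof. by rewrite /chi -exprD -(signr_odd _ (_ + _)) oddD -odd_card_symdiffI signr_odd. Qed.

Lemma chi_setT z : (chi setT z = 1 - 2 * parity z)%R.
Proof. by rewrite /chi setTI -signr_odd signrE -mul2n natrM. Qed.

Lemma chi_setC S z : (chi S z = chi setT z * chi (~: S) z)%R.
Proof.
by rewrite chiM; congr chi; apply/setP => i; rewrite !inE; case: (i \in S).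
Qed.

Definition deg_le (K : nat) (g : X -> 'Z_3) : Prop :=
  exists c : {ffun {set 'I_n} -> 'Z_3},
    (forall S, K < #|S| -> c S = 0%R) /\ g =1 (fun z => \sum_S c S * chi S z)%R.

Lemma eq_deg_le K g h : g =1 h -> deg_le K g -> deg_le K h.
Proof. by move=> gh [c [c0 gE]]; exists c; split=> // z; rewrite -gh. Qed.

Lemma deg_leW K K' g : K <= K' -> deg_le K g -> deg_le K' g.
Proof. by move=> le_KK' [c [c0 gE]]; exists c; split=> // S /(leq_ltn_trans le_KK')/c0. Qed.

Lemma deg_le_chi S : deg_le #|S| (chi S).
Proof.
exists [ffun T => (T == S)%:R%R]; split=> [T|z].
  by rewrite ffunE; case: eqP => // ->; rewrite ltnn.
rewrite (bigD1 S) //= ffunE eqxx mul1r big1 ?addr0 // => T /negbTE neq_TS.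
by rewrite ffunE neq_TS mul0r.
Qed.

Lemma deg_le_scale K a g : deg_le K g -> deg_le K (fun z => a * g z)%R.
Proof.
move=> [c [c0 gE]]; exists [ffun S => a * c S]%R; split=> [S /c0|z].
  by rewrite ffunE => ->; rewrite mulr0.
by rewrite gE mulr_sumr; apply: eq_bigr => S _; rewrite ffunE mulrA.
Qed.

Lemma deg_le_cst K a : deg_le K (fun => a).
Proof.
apply: eq_deg_le (deg_leW _ (deg_le_scale a (deg_le_chi set0))); last by rewrite cards0.
by move=> z; rewrite /chi set0I cards0 mulr1.
Qed.

Lemma deg_le_add K g h : deg_le K g -> deg_le K h -> deg_le K (fun z => g z + h z)%R.
Proof.
move=> [c [c0 gE]] [d [d0 hE]]; exists [ffun S => c S + d S]%R; split=> [S HS|z].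
  by rewrite ffunE c0 // d0 // addr0.
by rewrite gE hE -big_split; apply: eq_bigr => S _; rewrite ffunE mulrDl.
Qed.

Lemma deg_le_sub K g h : deg_le K g -> deg_le K h -> deg_le K (fun z => g z - h z)%R.
Proof.
move=> dg dh; apply: eq_deg_le (deg_le_add dg (deg_le_scale (-1) dh)) => z.
by rewrite mulN1r.
Qed.

Lemma deg_le_sum (I : Type) (r : seq I) (P : pred I) K (G : I -> X -> 'Z_3) :
  (forall i, P i -> deg_le K (G i)) ->
  deg_le K (fun z => \sum_(i <- r | P i) G i z)%R.
Proof.
move=> dG; elim: r => [|i r IH].
  by apply: eq_deg_le (deg_le_cst K 0%R) => z; rewrite big_nil.
have [Pi|nPi] := boolP (P i).
  by apply: eq_deg_le (deg_le_add (dG i Pi) IH) => z; rewrite big_cons Pi.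
by apply: eq_deg_le IH => z; rewrite big_cons (negbTE nPi).
Qed.

Lemma deg_le_mul K1 K2 g h :
  deg_le K1 g -> deg_le K2 h -> deg_le (K1 + K2) (fun z => g z * h z)%R.
Proof.
move=> [c [c0 gE]] [d [d0 hE]].
have term A B : deg_le (K1 + K2) (fun z => c A * d B * chi (symdiff A B) z)%R.
  have [le_A|/c0 cA0] := leqP #|A| K1; last first.
    by apply: eq_deg_le (deg_le_cst _ 0%R) => z; rewrite cA0 !mul0r.
  have [le_B|/d0 dB0] := leqP #|B| K2; last first.
    by apply: eq_deg_le (deg_le_cst _ 0%R) => z; rewrite dB0 mulr0 mul0r.
  apply/deg_le_scale/(deg_leW _ (deg_le_chi _)).
  exact: leq_trans (card_symdiff_le A B) (leq_add le_A le_B).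
apply: (@eq_deg_le _ (fun z => \sum_A \sum_B c A * d B * chi (symdiff A B) z)%R).
  move=> z; rewrite gE hE mulr_suml; apply: eq_bigr => A _; rewrite mulr_sumr.
  by apply: eq_bigr => B _; rewrite mulrACA chiM.
by apply: deg_le_sum => A _; apply: deg_le_sum => B _; apply: term.
Qed.

Lemma deg_le_prod (l K : nat) (G : 'I_l -> X -> 'Z_3) :
  (forall i, deg_le K (G i)) -> deg_le (l * K) (fun z => \prod_(i < l) G i z)%R.
Proof.
elim: l G => [|l IH] G dG.
  by apply: eq_deg_le (deg_le_cst _ 1%R) => z; rewrite big_ord0.
rewrite mulSnr.
apply: eq_deg_le (deg_le_mul (IH _ (fun i => dG (widen_ord _ i))) (dG ord_max)) => z.
by rewrite big_ord_recr.
Qed.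

Lemma deg_le_var i : deg_le 1 (fun z => (tnth z i)%:R : 'Z_3)%R.
Proof.
have d_chi : deg_le 1 (chi [set i]) by rewrite -(cards1 i); apply: deg_le_chi.
apply: eq_deg_le (deg_le_sub d_chi (deg_le_cst 1 1%R)) => z; rewrite /chi.
have [zi|zi] := boolP (tnth z i).
  have -> : [set i] :&: ones z = [set i] by apply/setIidPl; rewrite sub1set inE.
  by rewrite cards1; apply/val_inj.
have -> : [set i] :&: ones z = set0.
  by apply/setP => j; rewrite !inE; case: eqP => // ->; rewrite (negbTE zi).
by rewrite cards0 subrr.
Qed.

Lemma deg_le_any (h : X -> 'Z_3) : deg_le n h.
Proof.
pose delta a z := (\prod_(i < n)
  if tnth a i then (tnth z i)%:R else 1 - (tnth z i)%:R : 'Z_3)%R.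
have deg_delta a : deg_le n (delta a).
  rewrite -[n in deg_le n]muln1; apply: deg_le_prod => i.
  case: (tnth a i); first exact: deg_le_var.
  exact: deg_le_sub (deg_le_cst 1 1%R) (deg_le_var i).
have deltaE a z : delta a z = (a == z)%:R%R.
  have [<-|neq_az] := eqVneq a z.
    by rewrite /delta big1 // => i _; case: (tnth a i); rewrite ?subr0.
  have [i neq_i] : exists i, tnth a i != tnth z i.
    apply/existsP; apply: contraR neq_az => /existsPn same.
    by apply/eqP/eq_from_tnth => i; apply/eqP; rewrite -[_ == _]negbK same.
  rewrite /delta (bigD1 i) //=; move: neq_i.
  by case: (tnth a i); case: (tnth z i) => //= _; rewrite ?subrr mul0r.
apply: (@eq_deg_le _ (fun z => \sum_a h a * delta a z)%R).
  move=> z; rewrite (bigD1 z) //= deltaE eqxx mulr1 big1 ?addr0 // => a /negbTE neq_az.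
  by rewrite deltaE neq_az mulr0.
by apply: deg_le_sum => a _; apply: deg_le_scale.
Qed.

(* Counting: the 3^#|Small| polynomials of degree at most K restrict onto all
   3^#|G| functions on G. *)
Lemma card_interpolation_le K (G : {set X}) :
  (forall h : X -> 'Z_3, exists2 H, deg_le K H & {in G, h =1 H}) ->
  #|G| <= #|[set S : {set 'I_n} | #|S| <= K]|.
Proof.
move=> interp; set Small := [set S : {set 'I_n} | #|S| <= K].
pose restr (c : {ffun {set 'I_n} -> 'Z_3}) : {ffun X -> 'Z_3} :=
  [ffun z => if z \in G then \sum_S c S * chi S z else 0]%R.
have onto : pffun_on 0%R G [set: 'Z_3] \subset restr @: pffun_on 0%R Small [set: 'Z_3].
  apply/subsetP => f /pffun_onP [supp_f _].
  have [H [c [c0 HE]] fH] := interp f.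
  apply/imsetP; exists c.
    apply/pffun_onP; split=> [|S _]; last by rewrite inE.
    apply/subsetP => S; rewrite !inE; apply: contraR; rewrite -ltnNge => /c0 ->.
    by rewrite eqxx.
  apply/ffunP => z; rewrite ffunE; case: ifP => Gz; first by rewrite fH // HE.
  by apply/eqP; apply: contraFT Gz => /(subsetP supp_f).
have := leq_trans (subset_leq_card onto) (leq_imset_card _ _).
by rewrite !card_pffun_on cardsT card_ord leq_exp2l.
Qed.

(* Smolensky: where P agrees with parity, chi S = (1 - 2 P) * chi (~: S), so
   characters of size above n/2 + D can be traded for polynomials of degree
   at most n/2 + D. *)
Lemma parity_agreement_le D P : deg_le D P ->
  #|[set z | P z == parity z]| <= #|[set S : {set 'I_n} | #|S| <= n./2 + D]|.
Proof.
move=> dP; apply: card_interpolation_le => h.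
have [c [_ hE]] := deg_le_any h.
pose q z := (1 - 2 * P z)%R.
have dq : deg_le D q := deg_le_sub (deg_le_cst D 1%R) (deg_le_scale 2%R dP).
exists (fun z => \sum_S c S *
  (if #|S| <= n./2 + D then chi S z else q z * chi (~: S) z))%R.
  apply: deg_le_sum => S _; apply: deg_le_scale.
  have [small|large] := leqP #|S| (n./2 + D); first exact: deg_leW small (deg_le_chi S).
  apply: deg_leW (deg_le_mul dq (deg_le_chi (~: S))).
  have := cardsC S; rewrite card_ord; have := odd_double_half n; lia.
move=> z; rewrite inE => /eqP Pz; rewrite hE; apply: eq_bigr => S _.
by case: ifP => // _; rewrite chi_setC chi_setT /q Pz.
Qed.

End Characters.

Arguments deg_le_cst {n} K a.

Lemma sqr_Z3 (x : 'Z_3) : x != 0%R -> (x ^+ 2 = 1)%R.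
Proof. by case: x => [[|[|[|]]]] //= lt_x3 _; apply/val_inj. Qed.

Lemma natr_Z3_eq0 k : (k%:R : 'Z_3)%R = 0%R -> 3 %| k.
Proof. by move/(congr1 val); rewrite /= Zp_nat /= => /eqP. Qed.

Lemma card_sets (T : finType) : #|{set T}| = 2 ^ #|T|.
Proof. by rewrite -cardsT -(card_powerset [set: T]) powersetT cardsT. Qed.

Lemma averaging (A B : finType) (E : A -> B -> bool) k :
  0 < #|A| -> (forall y, #|[set x | E x y]| * k <= #|A|) ->
  exists x, #|[set y | E x y]| * k <= #|B|.
Proof.
move=> A_gt0 rare.
have card_sum (T : finType) (p : pred T) : #|[set t | p t]| = \sum_t p t.
  by rewrite -sum1_card big_mkcond; apply: eq_bigr => t _; rewrite inE; case: (p t).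
have total : \sum_x #|[set y | E x y]| * k <= #|B| * #|A|.
  apply: leq_trans (_ : \sum_(y : B) #|A| <= _); last by rewrite sum_nat_const.
  rewrite -big_distrl /=; under eq_bigr do rewrite card_sum.
  rewrite exchange_big big_distrl /=; apply: leq_sum => y _.
  by rewrite -card_sum rare.
apply/existsP; apply: contraLR total; rewrite negb_exists -ltnNge => /forallP often.
apply: leq_trans (_ : \sum_(x : A) #|B|.+1 <= _); last first.
  by apply: leq_sum => x _; rewrite ltnNge often.
by rewrite sum_nat_const [_ * _.+1]mulnC ltn_pmul2r.
Qed.

Section OrApproximator.
Variable I : finType.
Implicit Types (b S : {set I}).

Definition mod3_null b := [set S | 3 %| #|S :&: b|].

(* Toggling a fixed element of b changes #|S :&: b| by one, so it maps
   mod3_null b injectively into its complement. *)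
Lemma card_mod3_null b : b != set0 -> #|mod3_null b| * 2 <= 2 ^ #|I|.
Proof.
case/set0Pn => j0 b_j0; pose toggle := symdiff [set j0].
have toggle_inj : injective toggle := can_inj (symdiffK _).
have disj : [disjoint mod3_null b & toggle @: mod3_null b].
  apply/pred0P => S /=; apply/negP => /andP [S_null /imsetP [T T_null S_eq]].
  move: S_null T_null; rewrite S_eq !inE /toggle; have [T_j0|T_j0] := boolP (j0 \in T).
    have -> : symdiff [set j0] T :&: b = (T :&: b) :\ j0.
      apply/setP => i; rewrite !inE; case: eqP => [->|_]; rewrite ?T_j0 ?b_j0 //.
      by case: (i \in T).
    by rewrite [#|T :&: b|](cardsD1 j0) !inE T_j0 b_j0 /= add1n => ??; lia.
  have -> : symdiff [set j0] T :&: b = j0 |: (T :&: b).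
    apply/setP => i; rewrite !inE; case: eqP => [->|_]; rewrite ?(negbTE T_j0) ?b_j0 //.
    by case: (i \in T).
  by rewrite cardsU1 !inE (negbTE T_j0) /= add1n => ??; lia.
have := max_card (mod3_null b :|: toggle @: mod3_null b).
rewrite cardsU (disjoint_setI0 disj) cards0 subn0 card_imset // card_sets.
by rewrite muln2 -addnn.
Qed.

Definition or_fails l (f : {ffun 'I_l -> {set I}}) b :=
  (b != set0) && [forall i, f i \in mod3_null b].

Lemma card_or_fails l b :
  #|[set f | @or_fails l f b]| * 2 ^ l <= #|{ffun 'I_l -> {set I}}|.
Proof.
have [->|b_neq0] := eqVneq b set0.
  by rewrite (_ : [set f | _] = set0) ?cards0 //; apply/setP => f; rewrite !inE /or_fails eqxx.
have -> : [set f | @or_fails l f b] = [set f in ffun_on (mod3_null b)].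
  by apply/setP => f; rewrite !inE /or_fails b_neq0; apply/forallP/ffun_onP.
rewrite cardsE card_ffun_on card_ffun card_sets !card_ord -expnMn.
by case: l => // l; rewrite leq_exp2r // card_mod3_null.
Qed.

(* Razborov's approximator: over 'Z_3 a nonzero sum squares to 1. *)
Definition or_approx l (f : {ffun 'I_l -> {set I}}) (v : I -> 'Z_3) : 'Z_3 :=
  (1 - \prod_(i < l) (1 - (\sum_(j in f i) v j) ^+ 2))%R.

Lemma eq_or_approx l (f : {ffun 'I_l -> {set I}}) v1 v2 :
  v1 =1 v2 -> or_approx f v1 = or_approx f v2.
Proof.
move=> v12; rewrite /or_approx; congr (_ - _)%R; apply: eq_bigr => i _.
by congr (_ - _ ^+ 2)%R; apply: eq_bigr => j _.
Qed.

Lemma or_approxE l (f : {ffun 'I_l -> {set I}}) (b : pred I) :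
  ~~ or_fails f [set j | b j] ->
  or_approx f (fun j => (b j)%:R)%R = ([exists j, b j])%:R%R.
Proof.
rewrite /or_fails negb_and negbK => /orP [/eqP b0 | /forallPn [i fi_good]].
  have bF j : b j = false by apply/negbTE; have := in_set0 j; rewrite -b0 inE => ->.
  rewrite (_ : [exists j, b j] = false); last by apply/existsPn => j; rewrite bF.
  rewrite /or_approx big1 ?subrr // => i _.
  by rewrite big1 ?expr0n ?subr0 // => j _; rewrite bF.
have sumE : (\sum_(j in f i) (b j)%:R)%R = (#|f i :&: [set j | b j]|%:R : 'Z_3)%R.
  rewrite -natr_sum -sum1_card big_mkcond [in RHS]big_mkcond /=.
  by congr (_%:R)%R; apply: eq_bigr => j _; rewrite !inE; case: (j \in f i); case: (b j).
have sum_neq0 : (\sum_(j in f i) (b j)%:R)%R != 0%R :> 'Z_3.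
  by rewrite sumE; apply: contra fi_good => /eqP /natr_Z3_eq0; rewrite inE.
have -> : [exists j, b j].
  apply: contraR sum_neq0 => /existsPn bF.
  by rewrite big1 // => j _; rewrite (negbTE (bF j)).
by rewrite /or_approx (bigD1 i) //= sqr_Z3 // subrr mul0r subr0.
Qed.

Lemma deg_le_or_approx n l (f : {ffun 'I_l -> {set I}}) M (p : I -> n.-tuple bool -> 'Z_3) :
  (forall j, deg_le M (p j)) -> deg_le (2 * l * M) (fun z => or_approx f (fun j => p j z)).
Proof.
move=> dp; rewrite /or_approx.
have dsq i : deg_le (M + M) (fun z => 1 - (\sum_(j in f i) p j z) ^+ 2)%R.
  have dsum : deg_le M (fun z => \sum_(j in f i) p j z)%R by apply: deg_le_sum.
  apply: eq_deg_le (deg_le_sub (deg_le_cst _ 1%R) (deg_le_mul dsum dsum)) => z.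
  by rewrite expr2.
have -> : 2 * l * M = l * (M + M) by ring.
exact: deg_le_sub (deg_le_cst _ 1%R) (deg_le_prod dsq).
Qed.

End OrApproximator.

Lemma has_nth_ord (T : Type) (a : pred T) (s : seq T) x0 :
  has a s = [exists k : 'I_(size s), a (nth x0 s k)].
Proof.
apply/(has_nthP x0)/existsP => [[k k_lt ak]|[k ak]]; last by exists k.
by exists (Ordinal k_lt).
Qed.

Section GateApproximation.
Variables (n l : nat).
Hypothesis l_gt0 : 0 < l.
Local Notation X := (n.-tuple bool).
Implicit Types (B E : {set X}) (P : X -> 'Z_3) (b : X -> bool).

Definition agrees_off (B : {set X}) (P : X -> 'Z_3) (b : X -> bool) :=
  forall z, z \notin B -> P z = (b z)%:R%R.

Lemma agrees_off_not B P b :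
  agrees_off B P b -> agrees_off B (fun z => 1 - P z)%R (fun z => ~~ b z).
Proof. by move=> Pb z zB; rewrite Pb //; case: (b z); rewrite /= ?subrr ?subr0. Qed.

Lemma or_gate_approx (I : finType) M (p : I -> X -> 'Z_3) (b : I -> X -> bool) B :
  (forall j, deg_le M (p j)) -> (forall j, agrees_off B (p j) (b j)) ->
  exists P (E : {set X}), [/\ #|E| * 2 ^ l <= 2 ^ n, deg_le (2 * l * M) P
                            & agrees_off (B :|: E) P (fun z => [exists j, b j z])].
Proof.
move=> dp pb; pose fails f z := @or_fails I l f [set j | b j z].
have [f rare_f] : exists f, #|[set z | fails f z]| * 2 ^ l <= #|{: X}|.
  apply: averaging => [|z]; last exact: card_or_fails.
  by apply/card_gt0P; exists [ffun=> set0].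
exists (fun z => or_approx f (fun j => p j z)), [set z | fails f z]; split.
- by rewrite card_tuple card_bool in rare_f.
- exact: deg_le_or_approx.
move=> z; rewrite !inE negb_or => /andP [zB z_ok].
by rewrite (eq_or_approx _ (fun j => pb j z zB)) or_approxE.
Qed.

Lemma gate_approx (vals : X -> seq bool) (ds : seq nat) (P : nat -> X -> 'Z_3) B W g :
  (forall w, w < W -> deg_le ((2 * l) ^ nth 0 ds w) (P w) /\
                      agrees_off B (P w) (fun z => nth false (vals z) w)) ->
  all (fun j => j < W) (gate_inputs g) ->
  exists Pg (E : {set X}), [/\ #|E| * 2 ^ l <= 2 ^ n, deg_le ((2 * l) ^ gate_depth ds g) Pg
                             & agrees_off (B :|: E) Pg (fun z => gate_val (vals z) g)].
Proof.
move=> wires g_wf; set M := (2 * l) ^ \max_(j <- gate_inputs g) nth 0 ds j.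
have [in_deg in_val] : (forall j, j \in gate_inputs g -> deg_le M (P j)) /\
    (forall j, j \in gate_inputs g -> agrees_off B (P j) (fun z => nth false (vals z) j)).
  split=> j j_in; have [dPj Pj] := wires j (allP g_wf j j_in) => //.
  apply: deg_leW dPj; apply: leq_pexp2l; first by rewrite muln_gt0 l_gt0.
  exact: leq_bigmax_seq.
have -> : (2 * l) ^ gate_depth ds g = 2 * l * M by rewrite /gate_depth expnS.
move: M in_deg in_val; case: g {g_wf} => [s|s|j] /= M in_deg in_val.
- have [Pg [E [cardE dPg agrees]]] := or_gate_approx
    (fun k => deg_le_sub (deg_le_cst M 1%R) (in_deg _ (mem_nth 0 (ltn_ord k))))
    (fun k => agrees_off_not (in_val _ (mem_nth 0 (ltn_ord k)))).
  exists (fun z => 1 - Pg z)%R, E; split=> //; first exact: deg_le_sub (deg_le_cst _ 1%R) dPg.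
  move=> z zBE; rewrite (agrees_off_not agrees) //=.
  by rewrite -[all _ s]negbK -has_predC (has_nth_ord _ _ 0).
- have [Pg [E [cardE dPg agrees]]] := or_gate_approx
    (fun k => in_deg _ (mem_nth 0 (ltn_ord k))) (fun k => in_val _ (mem_nth 0 (ltn_ord k))).
  exists Pg, E; split=> // z zBE.
  by rewrite agrees // (has_nth_ord _ _ 0).
exists (fun z => 1 - P j z)%R, set0; split; first by rewrite cards0.
  apply: deg_leW (deg_le_sub (deg_le_cst _ 1%R) (in_deg j (mem_head _ _))).
  by rewrite leq_pmull // muln_gt0 l_gt0.
by rewrite setU0; apply/agrees_off_not/in_val/mem_head.
Qed.

End GateApproximation.

Lemma wire_values_rcons C g inp :
  wire_values (rcons C g) inp = rcons (wire_values C inp) (gate_val (wire_values C inp) g).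
Proof. by rewrite /wire_values foldl_rcons. Qed.

Lemma size_wire_values C inp : size (wire_values C inp) = size inp + size C.
Proof.
elim/last_ind: C => [|C g IH]; first by rewrite addn0.
by rewrite wire_values_rcons !size_rcons IH addnS.
Qed.

Lemma wire_depths_rcons N C g :
  wire_depths N (rcons C g) = rcons (wire_depths N C) (gate_depth (wire_depths N C) g).
Proof. by rewrite /wire_depths foldl_rcons. Qed.

Lemma size_wire_depths N C : size (wire_depths N C) = N + size C.
Proof.
elim/last_ind: C => [|C g IH]; first by rewrite addn0 size_nseq.
by rewrite wire_depths_rcons !size_rcons IH addnS.
Qed.

Lemma wf_from_rcons m C g :
  wf_from m (rcons C g) = wf_from m C && all (fun j => j < m + size C) (gate_inputs g).
Proof.
elim: C m => [|g' C IH] m /=; first by rewrite addn0 andbT.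
by rewrite IH addSnnS andbA.
Qed.

Section CircuitApproximation.
Variables (n l N : nat) (rho : n.-tuple bool -> seq bool).
Hypothesis l_gt0 : 0 < l.
Hypothesis size_rho : forall z, size (rho z) = N.
Hypothesis deg_rho : forall w, w < N -> deg_le 1 (fun z => (nth false (rho z) w)%:R%R : 'Z_3).

(* One exceptional set shared by all wires keeps the error additive in the
   number of gates rather than multiplying it by the fan-in. *)
Lemma wires_approx C : wf_from N C ->
  exists (P : nat -> n.-tuple bool -> 'Z_3) (B : {set n.-tuple bool}),
  #|B| * 2 ^ l <= size C * 2 ^ n /\
  forall w, w < N + size C ->
    deg_le ((2 * l) ^ nth 0 (wire_depths N C) w) (P w) /\
    agrees_off B (P w) (fun z => nth false (wire_values C (rho z)) w).
Proof.
elim/last_ind: C => [_|C g IH].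
  exists (fun w z => (nth false (rho z) w)%:R%R), set0; split; first by rewrite cards0.
  move=> w; rewrite addn0 => w_lt; split=> //.
  by rewrite /wire_depths /= nth_nseq if_same expn0; apply: deg_rho.
rewrite wf_from_rcons => /andP [wfC g_wf].
have [P [B [cardB wires]]] := IH wfC.
have [Pg [E [cardE dPg Pg_ok]]] := gate_approx l_gt0 wires g_wf.
exists (fun w => if w == N + size C then Pg else P w), (B :|: E); split.
  rewrite size_rcons mulSn addnC; apply: leq_trans (leq_add cardB cardE).
  by rewrite -mulnDl leq_mul2r cardsU leq_subr orbT.
move=> w; rewrite size_rcons addnS ltnS leq_eqVlt => /orP [/eqP ->|w_lt].
  rewrite eqxx wire_depths_rcons nth_rcons size_wire_depths ltnn eqxx; split=> // z zBE.
  by rewrite wire_values_rcons nth_rcons size_wire_values size_rho ltnn eqxx Pg_ok.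
have [dPw Pw_ok] := wires w w_lt.
rewrite (ltn_eqF w_lt) wire_depths_rcons nth_rcons size_wire_depths w_lt; split=> // z.
rewrite inE negb_or => /andP [zB _].
by rewrite wire_values_rcons nth_rcons size_wire_values size_rho w_lt Pw_ok.
Qed.

Lemma circuit_approx C d : wf_circuit N C -> cdepth N C <= d -> 0 < N ->
  exists (P : n.-tuple bool -> 'Z_3) (B : {set n.-tuple bool}),
  [/\ #|B| * 2 ^ l <= size C * 2 ^ n, deg_le ((2 * l) ^ d) P
    & agrees_off B P (fun z => circuit_eval C (rho z))].
Proof.
move=> wfC depthC N_gt0; have [P [B [cardB wires]]] := wires_approx wfC.
have last_lt : (N + size C).-1 < N + size C by rewrite prednK // ltn_addr.
have [dP P_ok] := wires _ last_lt.
exists (P (N + size C).-1), B; split=> // [|z zB].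
  apply: deg_leW dP; apply: leq_pexp2l; first by rewrite muln_gt0 l_gt0.
  apply: (leq_trans _ depthC); apply: leq_bigmax_seq => //.
  by apply: mem_nth; rewrite size_wire_depths.
by rewrite P_ok // /circuit_eval -nth_last size_wire_values size_rho.
Qed.

End CircuitApproximation.

Lemma bin_double_succ m : m.+1 * 'C(m.+1.*2, m.+1) = 2 * m.*2.+1 * 'C(m.*2, m).
Proof.
have sym : 'C(m.*2.+1, m.+1) = 'C(m.*2.+1, m).
  have le_m : m <= m.*2.+1 by rewrite -addnn ltnW // ltnS leq_addr.
  by rewrite -(bin_sub le_m) -addnn -addSn addnK.
by rewrite doubleS binS sym addnn -mul2n mulnCA -sym -mul_bin_diag mulnA.
Qed.


Lemma central_bin_sqr_le m : 'C(m.*2, m) ^ 2 * (3 * m + 1) <= 16 ^ m.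
Proof.
elim: m => [|m IH]; first by rewrite bin0.
set a := 'C(m.*2, m) in IH *; set b := 'C(m.+1.*2, m.+1).
have step : m.+1 ^ 2 * (b ^ 2 * (3 * m.+1 + 1)) = 4 * m.*2.+1 ^ 2 * (3 * m.+1 + 1) * a ^ 2.
  by rewrite mulnA -expnMn bin_double_succ !expnMn; ring.
have ratio : 4 * m.*2.+1 ^ 2 * (3 * m.+1 + 1) <= 16 * m.+1 ^ 2 * (3 * m + 1).
  have -> : 16 * m.+1 ^ 2 * (3 * m + 1) = 4 * m.*2.+1 ^ 2 * (3 * m.+1 + 1) + 4 * m.
    by rewrite -addnn; ring.
  exact: leq_addr.
rewrite -(@leq_pmul2l (m.+1 ^ 2)) ?expn_gt0 // step.
apply: leq_trans (leq_mul ratio (leqnn (a ^ 2))) _.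
rewrite [16 ^ _]expnS (_ : _ * a ^ 2 = m.+1 ^ 2 * (16 * (a ^ 2 * (3 * m + 1)))); last by ring.
by rewrite !leq_mul2l IH !orbT.
Qed.

Lemma card_sets_leq (T : finType) k :
  #|[set S : {set T} | #|S| <= k]| = #|[set S : {set T} | #|S| < k]| + 'C(#|T|, k).
Proof.
have -> : [set S : {set T} | #|S| <= k] =
          [set S : {set T} | #|S| < k] :|: [set S : {set T} | #|S| == k].
  by apply/setP => S; rewrite !inE leq_eqVlt orbC.
rewrite cardsU card_draws (_ : _ :&: _ = set0) ?cards0 ?subn0 //.
by apply/setP => S; rewrite !inE; case: ltngtP.
Qed.

Section HalfSizedSets.
Variable m : nat.
Local Notation T := 'I_(m.*2).

Lemma card_lt_half_sets : #|[set S : {set T} | #|S| < m]| * 2 <= 4 ^ m.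
Proof.
set L := [set S : {set T} | #|S| < m].
have disj : [disjoint L & (@setC T) @: L].
  apply/pred0P => S /=; apply/negP => /andP [S_small /imsetP [U U_small S_eq]].
  move: S_small U_small; rewrite S_eq !inE.
  by have := cardsC U; rewrite card_ord; lia.
have := max_card (L :|: (@setC T) @: L).
rewrite cardsU (disjoint_setI0 disj) cards0 subn0 card_imset; last exact: setC_inj.
have pow : 2 ^ m.*2 = 4 ^ m by rewrite -mul2n expnM.
by rewrite card_sets card_ord pow muln2 addnn.
Qed.

Lemma leq_bin_central i : 'C(m.*2, m + i) <= 'C(m.*2, m).
Proof.
elim: i => [|i IH]; first by rewrite addn0.
apply: leq_trans IH; rewrite addnS -(@leq_pmul2l (m + i).+1) // mul_bin_left.
by rewrite leq_mul2r -addnn; apply/orP; right; lia.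
Qed.

Lemma card_leq_half_add_sets D :
  #|[set S : {set T} | #|S| <= m + D]| <= #|[set S : {set T} | #|S| < m]| + D.+1 * 'C(m.*2, m).
Proof.
elim: D => [|D IH]; first by rewrite addn0 card_sets_leq card_ord mul1n.
rewrite card_sets_leq card_ord addnS.
have -> : [set S : {set T} | #|S| < (m + D).+1] = [set S : {set T} | #|S| <= m + D].
  by apply/setP => S; rewrite !inE ltnS.
by have := leq_bin_central D.+1; rewrite addnS; lia.
Qed.

Lemma card_leq_half_add_sets_small D : 16 * D.+1 ^ 2 <= 3 * m + 1 ->
  #|[set S : {set T} | #|S| <= m + D]| * 4 <= 3 * 4 ^ m.
Proof.
move=> D_small.
have central : 4 * D.+1 * 'C(m.*2, m) <= 4 ^ m.
  have pow : (4 ^ m) ^ 2 = 16 ^ m by rewrite -expnM mulnC expnM.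
  rewrite -(@leq_exp2r _ _ 2) // pow; apply: leq_trans (central_bin_sqr_le m).
  have -> : (4 * D.+1 * 'C(m.*2, m)) ^ 2 = 'C(m.*2, m) ^ 2 * (16 * D.+1 ^ 2) by ring.
  by rewrite leq_mul2l D_small orbT.
have := card_lt_half_sets; have := card_leq_half_add_sets D; nia.
Qed.

End HalfSizedSets.

Lemma subseq_nseq_true k (s : seq bool) : subseq (nseq k true) s = (k <= count id s).
Proof.
elim: s k => [|x s IH] [|k] //=; case: x => /=; first by rewrite IH.
by rewrite -[true :: nseq k true]/(nseq k.+1 true) IH.
Qed.

Lemma sum_alternating_lt (R : pzRingType) j c :
  (\sum_(t < j) (-1) ^+ t * (t < c)%:R = (odd (minn j c))%:R :> R)%R.
Proof.
elim: j => [|j IH]; first by rewrite big_ord0 min0n.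
rewrite big_ord_recr /= IH; have [lt_jc|le_cj] := ltnP j c.
  rewrite (minn_idPl lt_jc) mulr1 -signr_odd /=.
  by case: (odd j); rewrite /= ?addrN ?add0r.
by rewrite (minn_idPr (leqW le_cj)) mulr0 addr0.
Qed.

Section SSDCircuit.
Variables (n d l : nat) (C : circuit).
Local Notation N := (n.*2 + n.+1).
Local Notation X := (n.-tuple bool).
Hypothesis l_gt0 : 0 < l.
Hypothesis wfC : wf_circuit N C.
Hypothesis depthC : cdepth N C <= d.
Hypothesis C_SSD : forall z : N.-tuple bool, circuit_eval C z = SSD_bits n.*2 n.+1 z.

(* x = z 1^(n-t) 0^t and y = 1^(n+1), so that y is a subsequence of x
   exactly when z has more than t ones. *)
Definition threshold_input t (z : X) : seq bool :=
  (val z ++ nseq (n - t) true ++ nseq t false) ++ nseq n.+1 true.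

Lemma size_threshold_input t z : t <= n -> size (threshold_input t z) = N.
Proof.
by move=> le_tn; rewrite /threshold_input !size_cat !size_nseq size_tuple; lia.
Qed.

Lemma deg_le_threshold_input t w :
  deg_le 1 (fun z => (nth false (threshold_input t z) w)%:R%R : 'Z_3).
Proof.
have [lt_wn|le_nw] := ltnP w n.
  apply: eq_deg_le (deg_le_var (Ordinal lt_wn)) => z.
  by rewrite /threshold_input -catA nth_cat size_tuple lt_wn (tnth_nth false).
pose c := nth false ((nseq (n - t) true ++ nseq t false) ++ nseq n.+1 true) (w - n).
apply: eq_deg_le (deg_le_cst 1 c%:R%R) => z.
by rewrite /threshold_input -catA nth_cat size_tuple ltnNge le_nw.
Qed.

Lemma threshold_approx t : t < n ->
  exists (P : X -> 'Z_3) (B : {set X}),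
  [/\ #|B| * 2 ^ l <= size C * 2 ^ n, deg_le ((2 * l) ^ d) P
    & agrees_off B P (fun z => t < count id z)].
Proof.
move=> lt_tn; have le_tn := ltnW lt_tn.
have [P [B [cardB dP P_ok]]] := circuit_approx l_gt0 (fun z => size_threshold_input z le_tn)
  (fun w _ => deg_le_threshold_input t w) wfC depthC (ltn_addl _ (ltn0Sn n)).
exists P, B; split=> // z zB; rewrite P_ok //.
have /eqP size_input := size_threshold_input z le_tn.
rewrite (_ : circuit_eval _ _ = circuit_eval C (Tuple size_input)) // C_SSD /SSD_bits /=.
have size_x : size (val z ++ nseq (n - t) true ++ nseq t false) = n.*2.
  by rewrite !size_cat !size_nseq size_tuple; lia.
rewrite take_size_cat // drop_size_cat // subseq_nseq_true !count_cat !count_nseq /=.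
rewrite mul1n mul0n addn0 (_ : n < count id z + (n - t) = (t < count id z)) //.
by apply/idP/idP => ?; lia.
Qed.

Lemma alternating_threshold_approx j : j <= n ->
  exists (Q : X -> 'Z_3) (B : {set X}),
  [/\ #|B| * 2 ^ l <= j * size C * 2 ^ n, deg_le ((2 * l) ^ d) Q
    & forall z, z \notin B -> Q z = (\sum_(t < j) (-1) ^+ t * (t < count id z)%:R)%R].
Proof.
elim: j => [_|j IH lt_jn].
  exists (fun => 0%R), set0; split=> [||z _]; first by rewrite cards0.
    exact: deg_le_cst.
  by rewrite big_ord0.
have [Q [B [cardB dQ Q_ok]]] := IH (ltnW lt_jn).
have [P [B' [cardB' dP P_ok]]] := threshold_approx lt_jn.
exists (fun z => Q z + (-1) ^+ j * P z)%R, (B :|: B'); split.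
- rewrite mulSn mulnDl addnC; apply: leq_trans (leq_add cardB cardB').
  by rewrite -mulnDl leq_mul2r cardsU leq_subr orbT.
- exact: deg_le_add dQ (deg_le_scale _ dP).
move=> z; rewrite inE negb_or => /andP [zB zB'].
by rewrite big_ord_recr /= Q_ok // P_ok.
Qed.

Lemma parity_approx : exists (Q : X -> 'Z_3) (B : {set X}),
  [/\ #|B| * 2 ^ l <= n * size C * 2 ^ n, deg_le ((2 * l) ^ d) Q
    & forall z, z \notin B -> Q z = parity z].
Proof.
have [Q [B [cardB dQ Q_ok]]] := alternating_threshold_approx (leqnn n).
exists Q, B; split=> // z zB; rewrite Q_ok // sum_alternating_lt /parity card_ones.
by rewrite (minn_idPr _) // -{2}(size_tuple z) count_size.
Qed.

End SSDCircuit.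

Lemma leq_exp2rW m1 m2 e : m1 <= m2 -> m1 ^ e <= m2 ^ e.
Proof. by move=> le_m; case: e => // e; rewrite leq_exp2r. Qed.

Lemma exists_poly_le_exp2 a e : exists t, a * (t + 1) ^ e <= 2 ^ t.
Proof.
set u := 2 * e + a + 2; exists (2 ^ (2 * u)).
have lin_a : a < 2 ^ a by apply: ltn_expl.
have lin_u : u.+1 <= 2 ^ u by apply: ltn_expl.
have succ_le : 2 ^ (2 * u) + 1 <= 2 ^ (2 * u).+1.
  by rewrite expnS; have := expn_gt0 2 (2 * u); lia.
have exps_le : a + (2 * u).+1 * e <= 2 ^ (2 * u).
  apply: leq_trans (_ : u.+1 ^ 2 <= _); first by rewrite /u; nia.
  by rewrite mulnC expnM; apply: leq_exp2rW.
apply: leq_trans (_ : 2 ^ a * (2 ^ (2 * u).+1) ^ e <= _).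
  by apply: leq_mul; [exact: ltnW | exact: leq_exp2rW].
by rewrite -expnM -expnD leq_exp2l.
Qed.

(* Degree (2 l)^d must stay below sqrt m while the error 2^-l per gate, summed
   over n * size gates, stays below 1/8: take m = 2^t and l linear in t. *)
Lemma AC0_parameters c d : exists m l, [/\ 0 < m, 0 < l,
  16 * ((2 * l) ^ d).+1 ^ 2 <= 3 * m + 1
  & 8 * m.*2 * (c * (m.*2.*2 + m.*2.+1) ^ c) <= 2 ^ l].
Proof.
have [t t_large] := exists_poly_le_exp2 (64 * (8 * c.+1) ^ (2 * d)) (2 * d).
exists (2 ^ t), (4 + t + c + (t + 3) * c); split; rewrite ?expn_gt0 //.
  set Y := (8 * c.+1) ^ d * (t + 1) ^ d.
  have deg_le_Y : (2 * (4 + t + c + (t + 3) * c)) ^ d <= Y.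
    by rewrite /Y -expnMn; apply: leq_exp2rW; nia.
  have Y_gt0 : 0 < Y by rewrite /Y muln_gt0 !expn_gt0 muln_gt0 addn1.
  apply: leq_trans (_ : 16 * Y.*2 ^ 2 <= _); first by rewrite leq_mul2l leq_sqr; lia.
  have -> : 16 * Y.*2 ^ 2 = 64 * (8 * c.+1) ^ (2 * d) * (t + 1) ^ (2 * d).
    by rewrite /Y -mul2n !expnMn -!expnM [d * 2]mulnC; ring.
  by apply: leq_trans t_large _; lia.
have inputs_le : (2 ^ t).*2.*2 + (2 ^ t).*2.+1 <= 2 ^ (t + 3).
  by rewrite expnD; have := expn_gt0 2 t; lia.
have size_le : c * ((2 ^ t).*2.*2 + (2 ^ t).*2.+1) ^ c <= 2 ^ c * 2 ^ ((t + 3) * c).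
  apply: leq_mul; first exact: ltnW (ltn_expl _ _).
  by rewrite expnM; apply: leq_exp2rW.
apply: leq_trans (_ : 8 * (2 ^ t).*2 * (2 ^ c * 2 ^ ((t + 3) * c)) <= _).
  by rewrite leq_mul2l size_le orbT.
by apply: eq_leq; rewrite -mul2n !expnD; ring.
Qed.

Lemma leq_mul_inv a b c k e : 0 < b -> a * b <= k * e -> c * k <= b -> a * c <= e.
Proof.
move=> b_gt0 ab_le ck_le; have [k0|k_gt0] := posnP k.
  by move: ab_le; rewrite k0 mul0n leqn0 muln_eq0 (gtn_eqF b_gt0) orbF => /eqP ->.
rewrite -(leq_pmul2l k_gt0); apply: leq_trans ab_le.
by rewrite mulnCA leq_mul2l mulnC ck_le orbT.
Qed.

Theorem mainTheorem1 :
  ~ @AC0_family (fun k => k.*2 + k.+1) (fun k => SSD_bits k.*2 k.+1).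
Proof.
move=> [C [d [c AC0]]].
have [m [l [m_gt0 l_gt0 deg_small size_small]]] := AC0_parameters c d.
have [wfC depthC sizeC C_SSD] := AC0 m.*2 (etrans (double_gt0 m) m_gt0).
have [Q [B [cardB dQ Q_ok]]] := parity_approx l_gt0 wfC depthC C_SSD.
have agree : #|~: B| <= #|[set z | Q z == parity z]|.
  by apply/subset_leq_card/subsetP => z; rewrite !inE => /Q_ok ->.
have := parity_agreement_le dQ; rewrite doubleK => agree_small.
have := card_leq_half_add_sets_small deg_small => few_small.
have pow : 2 ^ m.*2 = 4 ^ m by rewrite -mul2n expnM.
have rare_B : #|B| * 8 <= 4 ^ m.
  rewrite -pow; apply: leq_mul_inv cardB _; first by rewrite expn_gt0.
  by apply: leq_trans size_small; rewrite mulnA leq_mul2l sizeC orbT.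
have := cardsC B; rewrite card_tuple card_bool pow.
lia.
Qed.
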